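(* Let $k\ge2$ be an integer and $\mathcal{M}=\{k\}\subseteq\mathbb{N}_0$. Then: (1) $\mathcal{M}^1=\{x\in\mathbb{N}_0:\ x\bmod 2k\in\{k,k+1,\dots,2k-1\}\}$; (2) $\mathcal{M}^2=\{k,\dots,2k-1\}\cup\{2jk-1:\ j\ge2\}$; (3) $\mathcal{M}^3=\{k,\dots,2k-1\}\cup\{4k-1,\dots,5k-2\}\cup\{(2j+1)k-2:\ j\ge3\}$; (4) $\mathcal{M}^4=\mathcal{M}_k\cap\{0,1,\dots,10k-3\}$; (5) $\mathcal{M}^5=\mathcal{M}_k$, where $\mathcal{M}_k=\{ip_k+j:\ i\in\mathbb{N}_0,\ k\le j\le 2k-1\}$ with $p_k=3k-1$.
   Context: A one-heap game is a set $\mathcal{M}\subseteq\mathbb{N}_0$ of moves; from position $x\in\mathbb{N}_0$ one may move to $y\in\mathbb{N}_0$ iff $x-y\in\mathcal{M}$. Misère play: a player who cannot move wins. If $0\in\mathcal{M}$, $P(\mathcal{M})=\varnothing$. Otherwise: a position is an N-position if it has no option or some option is a P-position; otherwise it is a P-position; $P(\mathcal{M})$ denotes the set of P-positions. $\mathcal{M}^\star=P(\mathcal{M})$, $\mathcal{M}^0=\mathcal{M}$, $\mathcal{M}^i=(\mathcal{M}^{i-1})^\star$. *)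

From mathcomp Require Import all_boot.
Set Implicit Arguments. Unset Strict Implicit. Unset Printing Implicit Defensive.

(* A one-heap game: a move set M, given as a boolean predicate on nat.
   From x one may move to y iff y <= x and x - y \in M. *)

(* Status of position x given the table [tab] of P-statuses of 0..x-1
   (valid when 0 \notin M, so every option y satisfies y < x).
   x is a P-position iff it has some option and no option is a P-position. *)
Definition newP (M : pred nat) (tab : seq bool) (x : nat) : bool :=
  has (fun y => M (x - y)) (iota 0 x) &&
  ~~ has (fun y => M (x - y) && nth false tab y) (iota 0 x).

Fixpoint Ptab (M : pred nat) (n : nat) : seq bool :=
  match n with
  | 0 => [::]
  | n'.+1 => let t := Ptab M n' in rcons t (newP M t n')
  end.

(* P(M): the set of P-positions; empty if 0 \in M. *)
Definition Pset (M : pred nat) : pred nat :=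
  fun x => ~~ M 0 && nth false (Ptab M x.+1) x.

Definition Miter (M : pred nat) (i : nat) : pred nat := iter i Pset M.

Definition Mk (k x : nat) : Prop :=
  exists i j, k <= j <= 2 * k - 1 /\ x = i * (3 * k - 1) + j.

(* A position is a P-position of the move set M exactly when it lies in the
   unique set Q such that every element of Q has a move, no move joins two
   elements of Q, and every other position with a move has a move into Q.
   Each M^i is therefore obtained from M^(i-1) by guessing Q and checking
   these three properties.  For M^1, ..., M^4 membership depends only on a
   few intervals and on the residue modulo 2k, for M^5 on the residue modulo
   p_k = 3k - 1, so every check is linear arithmetic once the residues of the
   positions involved are known. *)

From mathcomp Require Import all_boot zify.
From Stdlib Require Import Classical.

Set Implicit Arguments.
Unset Strict Implicit.
Unset Printing Implicit Defensive.

Section PsetKernel.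

Variable M : pred nat.
Hypothesis M0 : ~~ M 0.

Lemma size_Ptab n : size (Ptab M n) = n.
Proof. by elim: n => //= n IHn; rewrite size_rcons IHn. Qed.

Lemma nth_Ptab n y : y < n -> nth false (Ptab M n) y = nth false (Ptab M y.+1) y.
Proof.
elim: n => // n IHn lt_yn.
case: (ltnP y n) => [lt_yn' | le_ny]; last by have -> : y = n by lia.
by rewrite /= nth_rcons size_Ptab lt_yn' IHn.
Qed.

Lemma PsetE x : Pset M x =
  has (fun y => M (x - y)) (iota 0 x) &&
  ~~ has (fun y => M (x - y) && Pset M y) (iota 0 x).
Proof.
rewrite /Pset M0 /= nth_rcons size_Ptab ltnn eqxx /newP.
congr (_ && ~~ _); apply: eq_in_has => y; rewrite mem_iota => /andP [_ lt_yx] /=.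
by rewrite nth_Ptab.
Qed.

Lemma move_gt0 m : M m -> 0 < m.
Proof. by case: m => //; rewrite (negbTE M0). Qed.

Lemma Pset_iff_kernel (Q : nat -> Prop) :
  (forall x, Q x -> exists2 m, M m & m <= x) ->
  (forall m y, M m -> Q y -> ~ Q (m + y)) ->
  (forall m x, M m -> m <= x -> ~ Q x -> exists m' y, [/\ M m', Q y & m' + y = x]) ->
  forall x, Pset M x <-> Q x.
Proof.
move=> Q_move Q_indep Q_absorb; elim/ltn_ind => x IHx; rewrite PsetE; split.
- case/andP=> /hasP [y y_lt Mxy] /hasPn noP; apply: NNPP => notQx.
  rewrite mem_iota in y_lt.
  have [m' [z [Mm' Qz def_x]]] := Q_absorb _ x Mxy (leq_subr y x) notQx.
  have lt_zx : z < x by have := move_gt0 Mm'; lia.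
  have /negP[] := noP z (ltac:(rewrite mem_iota; lia)).
  by rewrite -def_x addnK Mm' (IHx z lt_zx).
- move=> Qx; have [m Mm le_mx] := Q_move x Qx; apply/andP; split.
    by apply/hasP; exists (x - m); [rewrite mem_iota; have := move_gt0 Mm; lia | rewrite subKn].
  apply/hasPn => y; rewrite mem_iota => /andP [_ lt_yx]; apply/negP => /andP [Mxy /IHx Qy].
  by apply: (Q_indep _ _ Mxy (Qy lt_yx)); rewrite subnK 1?ltnW.
Qed.

End PsetKernel.

Lemma exists_option (M : pred nat) (QM Q : nat -> Prop) x y :
  (forall z, M z <-> QM z) -> y <= x -> QM (x - y) -> Q y ->
  exists m z, [/\ M m, Q z & m + z = x].
Proof. by move=> M_QM le_yx /M_QM Mxy Qy; exists (x - y), y; rewrite subnK. Qed.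

Lemma modnD_cases d a b : 0 < d ->
  (a + b) %% d = a %% d + b %% d \/ (a + b) %% d + d = a %% d + b %% d.
Proof.
move=> d_gt0; rewrite modnD //.
have := ltn_pmod a d_gt0; have := ltn_pmod b d_gt0.
by case: leqP => /= ? ? ?; lia.
Qed.

Lemma modnB_cases d x y : 0 < d -> y <= x ->
  x %% d = (x - y) %% d + y %% d \/ x %% d + d = (x - y) %% d + y %% d.
Proof. by move=> d_gt0 le_yx; have := modnD_cases (x - y) y d_gt0; rewrite subnK. Qed.

Lemma modn_between c d t : c * d <= t < c.+1 * d -> t %% d + c * d = t.
Proof. by move=> /andP [lo hi]; rewrite -{1}(subnKC lo) modnMDl modn_small; lia. Qed.

Lemma modn_quotient_ge c d x : 0 < d -> c * d <= x -> exists q, x = (c + q) * d + x %% d.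
Proof.
by move=> d_gt0 le_cdx; exists (x %/ d - c); rewrite subnKC -?divn_eq // leq_divRL.
Qed.

Lemma modn_eq_iff d x r : r < d -> x %% d = r <-> exists q, x = q * d + r.
Proof.
move=> lt_rd; split => [<- | [q ->]]; first by exists (x %/ d); exact: divn_eq.
by rewrite modnMDl modn_small.
Qed.

Ltac abstract_remainder t d d_gt0 :=
  have := ltn_pmod t d_gt0; have := leq_mod t d;
  let r := fresh "r" in set (r := t %% d) in *; clearbody r; move=> ? ?.

(* lia does not handle [%%] with a non-constant modulus: every remainder
   [t %% d] is replaced by a fresh [r] with [r < d] and [r <= t]; the facts
   tying [r] to [t] (modn_between, modnD_cases, ...) must be in the context. *)
Ltac remainder_lia d :=
  lazymatch goal with d_gt0 : is_true (0 < d) |- _ =>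
    repeat match goal with
    | |- context [?t %% d] => abstract_remainder t d d_gt0
    | _ : context [?t %% d] |- _ => abstract_remainder t d d_gt0
    end
  end; lia.

Section Iterates.

Variable k : nat.
Hypothesis k_ge2 : 2 <= k.

(* M^1, ..., M^5 for M = {k}, with residues in place of the multiples of the
   statement of lemma9, so that remainder_lia applies. *)
Definition M1 x := k <= x %% (2 * k).
Definition M2 x := k <= x < 2 * k \/ (x %% (2 * k) = 2 * k - 1 /\ 4 * k <= x + 1).
Definition M3 x :=
  k <= x < 2 * k \/ 4 * k <= x + 1 < 5 * k \/ (x %% (2 * k) = k - 2 /\ 7 * k <= x + 2).
Definition M4 x :=
  k <= x < 2 * k \/ 4 * k <= x + 1 < 5 * k \/ 7 * k <= x + 2 < 8 * k \/ x + 3 = 10 * k.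
Definition M5 x := k <= x %% (3 * k - 1) < 2 * k.

Ltac iterates_lia d := unfold M1, M2, M3, M4, M5 in *; remainder_lia d.

Ltac take_option prev_iff y d :=
  apply: (exists_option prev_iff (y := y)); iterates_lia d.

Let k2_gt0 : 0 < 2 * k. Proof. lia. Qed.

Lemma Miter1_iff x : Miter (pred1 k) 1 x <-> M1 x.
Proof.
have k_mod := @modn_small k (2 * k).
apply: (@Pset_iff_kernel _ _ M1) => {x} [| x Qx | m y /eqP-> Qy | m x /eqP-> le_kx notQx].
- by rewrite /= eq_sym; case: k k_ge2.
- by exists k; [exact: eqxx | iterates_lia (2 * k)].
- by have := modnD_cases k y k2_gt0; iterates_lia (2 * k).
- exists k, (x - k); split; [exact: eqxx | | by rewrite subnKC].
  by have := @modnB_cases _ x k k2_gt0; iterates_lia (2 * k).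
Qed.

Lemma Miter2_iff x : Miter (pred1 k) 2 x <-> M2 x.
Proof.
apply: (@Pset_iff_kernel _ _ M2) => {x} [| x Qx | m y /Miter1_iff Qm Qy | m x /Miter1_iff Qm le_mx notQx].
- by apply/negP => /Miter1_iff; iterates_lia (2 * k).
- by exists k; [apply/Miter1_iff; have := @modn_small k (2 * k) | ]; iterates_lia (2 * k).
- by have := modnD_cases m y k2_gt0; have := @modn_small y (2 * k); iterates_lia (2 * k).
- have x_band0 := @modn_small x (2 * k).
  have x_band1 := @modn_between 1 (2 * k) x.
  case: (ltnP (x %% (2 * k)) k) => [r_lo|r_hi].
  + have y_mod := @modn_small (k + x %% (2 * k)) (2 * k).
    have x_mod := @modnB_cases _ x (k + x %% (2 * k)) k2_gt0.
    by take_option Miter1_iff (k + x %% (2 * k)) (2 * k).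
  + have y_mod := @modn_small (2 * k - 1) (2 * k).
    have x_mod := @modnB_cases _ x (2 * k - 1) k2_gt0.
    by take_option Miter1_iff (2 * k - 1) (2 * k).
Qed.

Lemma M3_absorbs_large x : 7 * k <= x + 2 -> x %% (2 * k) != k - 2 ->
  exists m y, [/\ Miter (pred1 k) 2 m, M3 y & m + y = x].
Proof.
move=> x_big r_ne; have [q x_eq] := @modn_quotient_ge 3 (2 * k) x k2_gt0 (ltac:(lia)).
(* lia cannot see that x - x %% (2 * k) is a multiple of 2k; spell out the relevant ones. *)
have x_quot : x = 6 * k + x %% (2 * k) \/ 8 * k + x %% (2 * k) <= x.
  by case: q x_eq => [|q] x_eq; iterates_lia (2 * k).
clear q x_eq.
case: (leqP (x %% (2 * k) + 3) k) => [r_lo|r_k].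
  have y_mod := @modn_between 2 (2 * k) (4 * k + x %% (2 * k) + 1).
  have x_mod := @modnB_cases _ x (4 * k + x %% (2 * k) + 1) k2_gt0.
  by take_option Miter2_iff (4 * k + x %% (2 * k) + 1) (2 * k).
case: (leqP (x %% (2 * k) + 2) (2 * k)) => [r_mid|r_hi].
  have y_mod := @modn_small (x %% (2 * k) + 1) (2 * k).
  have x_mod := @modnB_cases _ x (x %% (2 * k) + 1) k2_gt0.
  by take_option Miter2_iff (x %% (2 * k) + 1) (2 * k).
have y_mod := @modn_between 2 (2 * k) (4 * k).
have x_mod := @modnB_cases _ x (4 * k) k2_gt0.
by take_option Miter2_iff (4 * k) (2 * k).
Qed.

Lemma M3_absorbs x : k <= x -> ~ M3 x ->
  exists m y, [/\ Miter (pred1 k) 2 m, M3 y & m + y = x].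
Proof.
move=> x_ge_k notQx.
case: (leqP (x + 1) (3 * k)) => [x_lo|x_3k]; first by take_option Miter2_iff k (2 * k).
case: (leqP (x + 2) (4 * k)) => [x_lo|x_4k]; first by take_option Miter2_iff (2 * k - 1) (2 * k).
case: (leqP (x + 2) (6 * k)) => [x_lo|x_6k]; first by take_option Miter2_iff (4 * k - 1) (2 * k).
case: (leqP (x + 3) (7 * k)) => [x_lo|x_7k].
  by take_option Miter2_iff (x - (2 * k - 1)) (2 * k).
by apply: M3_absorbs_large; iterates_lia (2 * k).
Qed.

Lemma Miter3_iff x : Miter (pred1 k) 3 x <-> M3 x.
Proof.
apply: (@Pset_iff_kernel _ _ M3) => {x} [| x Qx | m y /Miter2_iff Qm Qy | m x /Miter2_iff Qm le_mx notQx].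
- by apply/negP => /Miter2_iff; iterates_lia (2 * k).
- by exists k; [apply/Miter2_iff | ]; iterates_lia (2 * k).
- have := modnD_cases m y k2_gt0; have := @modn_small m (2 * k); have := @modn_small y (2 * k).
  have := @modn_between 1 (2 * k) y; have := @modn_between 2 (2 * k) y.
  by iterates_lia (2 * k).
- by apply: M3_absorbs => //; iterates_lia (2 * k).
Qed.

Lemma M4_absorbs_large x : 10 * k <= x + 2 ->
  exists m y, [/\ Miter (pred1 k) 3 m, M4 y & m + y = x].
Proof.
move=> x_big; have [q x_eq] := @modn_quotient_ge 4 (2 * k) x k2_gt0 (ltac:(lia)).
have x_quot : x = 8 * k + x %% (2 * k) \/ x = 10 * k + x %% (2 * k) \/
              x = 12 * k + x %% (2 * k) \/ 14 * k + x %% (2 * k) <= x.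
  by case: q x_eq => [|[|[|q]]] x_eq; iterates_lia (2 * k).
clear q x_eq.
case: (leqP (2 * k) (x %% (2 * k) + 2)) => [r_hi|r_2k].
  have y_mod := @modn_small (x %% (2 * k) + 2 - k) (2 * k).
  have x_mod := @modnB_cases _ x (x %% (2 * k) + 2 - k) k2_gt0.
  by take_option Miter3_iff (x %% (2 * k) + 2 - k) (2 * k).
case: (leqP (x %% (2 * k) + 3) k) => [r_lo|r_k].
  have y_mod := @modn_small (x %% (2 * k) + k + 2) (2 * k).
  have x_mod := @modnB_cases _ x (x %% (2 * k) + k + 2) k2_gt0.
  by take_option Miter3_iff (x %% (2 * k) + k + 2) (2 * k).
case: (leqP (x %% (2 * k) + 4) (2 * k)) => [r_mid|r_top].
  have y_mod := @modn_between 2 (2 * k) (3 * k + x %% (2 * k) + 2).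
  have x_mod := @modnB_cases _ x (3 * k + x %% (2 * k) + 2) k2_gt0.
  by take_option Miter3_iff (3 * k + x %% (2 * k) + 2) (2 * k).
case: (leqP (x + 3) (12 * k)) => [x_lo|x_12k]; first by take_option Miter3_iff (8 * k - 3) (2 * k).
have y_mod := @modn_between 3 (2 * k) (7 * k - 1).
have x_mod := @modnB_cases _ x (7 * k - 1) k2_gt0.
by take_option Miter3_iff (7 * k - 1) (2 * k).
Qed.

Lemma M4_absorbs x : k <= x -> ~ M4 x ->
  exists m y, [/\ Miter (pred1 k) 3 m, M4 y & m + y = x].
Proof.
move=> x_ge_k notQx.
case: (leqP (x + 1) (3 * k)) => [x_lo|x_3k]; first by take_option Miter3_iff k (2 * k).
case: (leqP (x + 2) (4 * k)) => [x_lo|x_4k]; first by take_option Miter3_iff (2 * k - 1) (2 * k).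
case: (leqP (x + 2) (6 * k)) => [x_lo|x_6k]; first by take_option Miter3_iff (4 * k - 1) (2 * k).
case: (leqP (x + 3) (7 * k)) => [x_lo|x_7k].
  by take_option Miter3_iff (x - (2 * k - 1)) (2 * k).
case: (leqP (x + 3) (9 * k)) => [x_lo|x_9k]; first by take_option Miter3_iff (7 * k - 2) (2 * k).
case: (leqP (x + 4) (10 * k)) => [x_lo|x_10k].
  by take_option Miter3_iff (x - (2 * k - 1)) (2 * k).
by apply: M4_absorbs_large; iterates_lia (2 * k).
Qed.

Lemma Miter4_iff x : Miter (pred1 k) 4 x <-> M4 x.
Proof.
apply: (@Pset_iff_kernel _ _ M4) => {x} [| x Qx | m y /Miter3_iff Qm Qy | m x /Miter3_iff Qm le_mx notQx].
- by apply/negP => /Miter3_iff; iterates_lia (2 * k).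
- by exists k; [apply/Miter3_iff | ]; iterates_lia (2 * k).
- have := @modn_between 3 (2 * k) m; have := @modn_between 4 (2 * k) m.
  by iterates_lia (2 * k).
- by apply: M4_absorbs => //; iterates_lia (2 * k).
Qed.

Lemma Miter5_iff x : Miter (pred1 k) 5 x <-> M5 x.
Proof.
have p_gt0 : 0 < 3 * k - 1 by lia.
apply: (@Pset_iff_kernel _ _ M5) => {x} [| x Qx | m y /Miter4_iff Qm Qy | m x /Miter4_iff Qm le_mx notQx].
- by apply/negP => /Miter4_iff; iterates_lia (2 * k).
- by exists k; [apply/Miter4_iff | ]; iterates_lia (3 * k - 1).
- have := modnD_cases m y p_gt0; have := @modn_small m (3 * k - 1).
  have := @modn_between 1 (3 * k - 1) m; have := @modn_between 2 (3 * k - 1) m.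
  have := @modn_between 3 (3 * k - 1) m.
  by iterates_lia (3 * k - 1).
- have x_ge_k : k <= x by iterates_lia (2 * k).
  clear Qm le_mx.
  have x_band0 := @modn_small x (3 * k - 1).
  have k_mod := @modn_small k (3 * k - 1).
  have k2_mod := @modn_small (2 * k - 1) (3 * k - 1).
  case: (leqP (2 * k) (x %% (3 * k - 1))) => [r_hi|r_lo].
    have x_mod := @modnB_cases _ x k p_gt0.
    by take_option Miter4_iff (x - k) (3 * k - 1).
  have x_mod := @modnB_cases _ x (2 * k - 1) p_gt0.
  by take_option Miter4_iff (x - (2 * k - 1)) (3 * k - 1).
Qed.

Lemma M1_iff x : M1 x <-> k <= x %% (2 * k) <= 2 * k - 1.
Proof. by iterates_lia (2 * k). Qed.

Lemma M2_iff x : M2 x <->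
  (k <= x <= 2 * k - 1) \/ (exists j, 2 <= j /\ x = 2 * j * k - 1).
Proof.
rewrite /M2 (@modn_eq_iff _ _ (2 * k - 1)); last by lia.
split=> [[x_lo | [[q ->] x_ge]] | [x_lo | [j [j_ge ->]]]].
- by left; lia.
- by right; case: q x_ge => [|q] x_ge; [lia | exists q.+2; split => //; lia].
- by left; lia.
- by right; case: j j_ge => [|[|j]] // _; split; [exists j.+1 | ]; lia.
Qed.

Lemma M3_iff x : M3 x <->
  (k <= x <= 2 * k - 1) \/ (4 * k - 1 <= x <= 5 * k - 2) \/
  (exists j, 3 <= j /\ x = (2 * j + 1) * k - 2).
Proof.
rewrite /M3 (@modn_eq_iff _ _ (k - 2)); last by lia.
split=> [[x_lo | [x_mid | [[q ->] x_ge]]] | [x_lo | [x_mid | [j [j_ge ->]]]]].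
- by left; lia.
- by right; left; lia.
- right; right; case: q x_ge => [|[|[|q]]] x_ge; try lia.
  by exists q.+3; split => //; lia.
- by left; lia.
- by right; left; lia.
- by right; right; case: j j_ge => [|[|[|j]]] // _; split; [exists j.+3 | ]; lia.
Qed.

Lemma M5_iff x : M5 x <-> Mk k x.
Proof.
have p_gt0 : 0 < 3 * k - 1 by lia.
split => [x_mod | [i [j [j_range ->]]]]; last by rewrite /M5 modnMDl modn_small; lia.
exists (x %/ (3 * k - 1)), (x %% (3 * k - 1)); split; last exact: divn_eq.
by iterates_lia (3 * k - 1).
Qed.

Lemma M4_iff x : M4 x <-> Mk k x /\ x <= 10 * k - 3.
Proof.
have p_gt0 : 0 < 3 * k - 1 by lia.
rewrite -M5_iff; have := @modn_small x (3 * k - 1).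
have := @modn_between 1 (3 * k - 1) x; have := @modn_between 2 (3 * k - 1) x.
have := @modn_between 3 (3 * k - 1) x.
by iterates_lia (3 * k - 1).
Qed.

End Iterates.

Theorem lemma9 (k : nat) (hk : 2 <= k) :
  let M := pred1 k in
  (forall x, Miter M 1 x <-> k <= x %% (2 * k) <= 2 * k - 1) /\
  (forall x, Miter M 2 x <->
     (k <= x <= 2 * k - 1) \/ (exists j, 2 <= j /\ x = 2 * j * k - 1)) /\
  (forall x, Miter M 3 x <->
     (k <= x <= 2 * k - 1) \/ (4 * k - 1 <= x <= 5 * k - 2) \/
     (exists j, 3 <= j /\ x = (2 * j + 1) * k - 2)) /\
  (forall x, Miter M 4 x <-> Mk k x /\ x <= 10 * k - 3) /\
  (forall x, Miter M 5 x <-> Mk k x).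
Proof.
move=> M; split; [|split; [|split; [|split]]] => x.
- exact: iff_trans (Miter1_iff hk x) (M1_iff hk x).
- exact: iff_trans (Miter2_iff hk x) (M2_iff hk x).
- exact: iff_trans (Miter3_iff hk x) (M3_iff hk x).
- exact: iff_trans (Miter4_iff hk x) (M4_iff hk x).
- exact: iff_trans (Miter5_iff hk x) (M5_iff hk x).
Qed.
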